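(* Let $n\ge q\ge1$ and let $\mathcal{S}$ be a set of two-factor interactions $F_iF_j$ among $n$ factors $F_1,\dots,F_n$. Suppose at least one of the following holds: (i) every factor appears in at most $2^q-1$ interactions of $\mathcal{S}$, and there is no set of $2^q$ factors such that $\mathcal{S}$ contains all $\binom{2^q}{2}$ pairwise interactions among them; (ii) there are at most $2^q-1$ factors each of which appears in at least $2^q-1$ interactions of $\mathcal{S}$. Then there exists a blocked $2^n$ factorial in blocks of size $2^q$ from which all main effects and all interactions in $\mathcal{S}$ are estimable.
   Context: A blocked $2^n$ factorial in blocks of size $2^q$ is specified by a $q\times n$ generator matrix $X$ over $\mathrm{GF}(2)$ of rank $q$: the principal block is the row space of $X$ and the other blocks are its cosets in $\mathrm{GF}(2)^n$. An effect of a set $S$ of factors, with contrast $(-1)^{\sum_{j\in S}x_j}$, is estimable iff its contrast sums to zero over every block. *)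

From HB Require Import structures.
From mathcomp Require Import all_boot all_order all_algebra.
Set Implicit Arguments. Unset Strict Implicit. Unset Printing Implicit Defensive.
Import GRing.Theory.
Local Open Scope ring_scope.

(* Treatment combinations are row vectors x in GF(2)^n.  A blocking scheme
   is given by a generator matrix X : 'M['F_2]_(q, n) of rank q; the
   principal block is the row space of X and the blocks are its cosets
   a + rowspace(X), i.e. the x with (x - a) in the row space of X. *)
Definition in_block (q n : nat) (X : 'M['F_2]_(q, n)) (a x : 'rV['F_2]_n) : bool :=
  ((x - a) <= X)%MS.

Definition contrast (n : nat) (T : {set 'I_n}) (x : 'rV['F_2]_n) : int :=
  (-1) ^+ (nat_of_ord (\sum_(j in T) x 0 j)).

Definition estimable (q n : nat) (X : 'M['F_2]_(q, n)) (T : {set 'I_n}) : Prop :=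
  forall a : 'rV['F_2]_n,
    \sum_(x : 'rV['F_2]_n | in_block X a x) contrast T x = 0.

(* A two-factor interaction F_iF_j (i <> j) is represented by the 2-set {i, j}. *)
Definition two_factor_interactions (n : nat) (S : {set {set 'I_n}}) : Prop :=
  forall s, s \in S -> #|s| = 2%N.

Definition fdeg (n : nat) (S : {set {set 'I_n}}) (i : 'I_n) : nat :=
  #|[set s in S | i \in s]|.

From HB Require Import structures.
From mathcomp Require Import all_boot all_order all_algebra perm.
From mathcomp Require Import zify.
From Stdlib Require Classical_Prop.

(* Give each factor i a column col_i in GF(2)^q; these are the columns of the
   q x n generator matrix X.  The effect of a factor set T is estimable as
   soon as some vector r of the row space of X has odd weight on T, since the
   translation x |-> x + r permutes every block and negates the contrast of
   T.  Hence all main effects are estimable when every column is nonzero, and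
   the interaction F_iF_j when col_i <> col_j.  So it suffices to colour the
   interaction graph of S (factors adjacent when their interaction is in S)
   properly with the 2^q - 1 nonzero vectors of GF(2)^q; the rank of X is
   then raised to q (possible as q <= n) by replacing a column occurring in
   a linear dependency by a vector outside the column space.

   Such a colouring exists under (ii) by greedy colouring along a degeneracy
   order, and under (i) by Brooks' theorem for k = 2^q - 1 >= 3 (for q = 1
   the graph has no edges), proved by the classical Kempe-chain argument on a
   minimal non-colourable vertex set. *)

Section Colouring.
Variable V : finType.
Variable e : rel V.
Hypothesis e_sym : symmetric e.
Hypothesis e_irr : irreflexive e.
Variable k : nat.

Definition proper_colouring (U : {set V}) (c : V -> 'I_k) :=
  forall x y, x \in U -> y \in U -> e x y -> c x != c y.

Definition recol (c : V -> 'I_k) (u : V) (m : 'I_k) : V -> 'I_k :=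
  fun z => if z == u then m else c z.

Lemma proper_sub (A B : {set V}) (c : V -> 'I_k) :
  A \subset B -> proper_colouring B c -> proper_colouring A c.
Proof. by move=> /subsetP sAB hB x y hx hy; apply: hB; apply: sAB. Qed.

Lemma proper_recol (U : {set V}) x (c : V -> 'I_k) m : x \in U ->
  proper_colouring (U :\ x) c -> (forall y, y \in U :\ x -> e x y -> c y != m) ->
  proper_colouring U (recol c x m).
Proof.
move=> hx hc hm y z hy hz hyz; rewrite /recol.
have inD w : w \in U -> w != x -> w \in U :\ x by rewrite !inE => -> ->.
case: (y =P x) => [eyx | /eqP nyx]; case: (z =P x) => [ezx | /eqP nzx].
- by subst; rewrite e_irr in hyz.
- by rewrite eq_sym; apply: hm; [exact: inD | rewrite -eyx].
- by apply: hm; [exact: inD | rewrite -ezx e_sym].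
- by apply: hc => //; apply: inD.
Qed.

Lemma missing_colour (B : {set V}) (c : V -> 'I_k) :
  #|B| < k -> exists m, forall y, y \in B -> c y != m.
Proof.
move=> hB; have : ~~ ([set: 'I_k] \subset c @: B).
  apply: contraTN hB => /subset_leq_card; rewrite cardsT card_ord -leqNgt.
  by move/leq_trans; apply; apply: leq_imset_card.
by case/subsetPn => m _ hm; exists m => y hy; apply: contra hm => /eqP <-; apply: imset_f.
Qed.

Lemma degenerate_colouring : 0 < k ->
  (forall W : {set V}, W != set0 ->
     exists2 x, x \in W & #|[set y in W | e x y]| < k) ->
  forall U : {set V}, exists c, proper_colouring U c.
Proof.
move=> hk hW U; have [N] := ubnP #|U|; elim: N U => [|N IH] U //.
have [-> _ | [x0 hx0] hU] := set_0Vmem U.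
  by exists (fun _ => Ordinal hk) => x y; rewrite inE.
have [x hx hdx] := hW U (introT (set0Pn U) (ex_intro _ x0 hx0)).
have [c hc] : exists c, proper_colouring (U :\ x) c.
  by apply: IH; move: hU; rewrite (cardsD1 x U) hx.
have [m hm] := missing_colour _ c hdx.
exists (recol c x m); apply: proper_recol => // y hy hxy.
by apply: hm; rewrite inE hxy (subsetP (subD1set U x)).
Qed.

(* Condition (ii): at most k vertices of degree at least k.  A set of
   vertices all of degree >= k then has at most k elements, so each of its
   vertices has fewer than k neighbours inside it. *)
Lemma few_high_degree_colouring : 0 < k ->
  #|[set x | k <= #|[set y | e x y]|]| <= k ->
  forall U : {set V}, exists c, proper_colouring U c.
Proof.
move=> hk hH; apply: degenerate_colouring => // W /set0Pn [x0 hx0].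
case: (boolP [exists x in W, #|[set y | e x y]| < k]) => [/exists_inP [x hx hlt] | /exists_inPn hall].
  exists x => //; apply: leq_ltn_trans hlt; apply: subset_leq_card.
  by apply/subsetP => y; rewrite !inE => /andP [].
exists x0 => //.
have sW : W \subset [set x | k <= #|[set y | e x y]|].
  by apply/subsetP => x hx; rewrite inE leqNgt hall.
have : [set y in W | e x0 y] \subset W :\ x0.
  apply/subsetP => y; rewrite !inE => /andP [-> h]; rewrite andbT.
  by apply: contraTneq h => ->; rewrite e_irr.
move/subset_leq_card/leq_ltn_trans; apply.
by move: (leq_trans (subset_leq_card sW) hH); rewrite (cardsD1 x0 W) hx0.
Qed.

Lemma edgeless_colouring : 0 < k -> (forall x y, ~~ e x y) ->
  forall U : {set V}, exists c, proper_colouring U c.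
Proof. by move=> hk he U; exists (fun _ => Ordinal hk) => x y _ _; rewrite (negbTE (he x y)). Qed.

End Colouring.
Arguments proper_colouring {V} e {k} U c.
Arguments recol {V k} c u m.
Arguments proper_recol {V e} e_sym e_irr {k U x c m}.

Section Paths.
Variable V : finType.

Lemma connect_inv (R : rel V) (Q : pred V) x y :
  (forall a b, Q a -> R a b -> Q b) -> Q x -> connect R x y -> Q y.
Proof.
move=> hQ hx /connectP [p hp ->]; elim: p x hx hp => [|z p IH] x hx //=.
by move=> /andP [hxz hp]; apply: IH hp; apply: hQ hxz.
Qed.

Lemma connect_upath (R : rel V) x y : connect R x y ->
  exists p, [/\ path R x p, last x p = y & uniq (x :: p)].
Proof. by move=> /connectP [p0 hp0 ->]; case: (shortenP hp0) => p; exists p. Qed.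

Variable R : rel V.
Hypothesis Rsym : symmetric R.

Lemma path_prev x p r : path R x p -> 0 < r <= size p ->
  R (nth x (x :: p) r) (nth x (x :: p) r.-1).
Proof.
case: r => // r hp /andP [_ hr]; rewrite Rsym.
exact: (pathP x hp).
Qed.

Lemma path_nbr x p r z : let s := x :: p in
  path R x p -> uniq s -> r <= size p ->
  #|[set y | R (nth x s r) y]| <= (0 < r) + (r < size p) ->
  R (nth x s r) z ->
  (r < size p /\ z = nth x s r.+1) \/ (0 < r /\ z = nth x s r.-1).
Proof.
move=> s hp hu hr hcard hz.
have next : r < size p -> R (nth x s r) (nth x s r.+1) by move/(pathP x hp).
have prev : 0 < r -> R (nth x s r) (nth x s r.-1).
  by move=> h0; apply: path_prev; rewrite ?h0.
pose N := [set y | R (nth x s r) y].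
have full (P : {set V}) : P \subset N -> #|N| <= #|P| -> z \in P.
  move=> sPN hN; have /eqP -> : P == N by rewrite eqEcard sPN.
  by rewrite inE.
case h0: (0 < r); case h1: (r < size p); rewrite h0 h1 /= in hcard.
- have hne : nth x s r.+1 != nth x s r.-1 by rewrite nth_uniq //=; lia.
  have : z \in [set nth x s r.+1; nth x s r.-1].
    apply: full; last by rewrite cards2 hne.
    by apply/subsetP => y; rewrite !inE => /orP [] /eqP ->; [apply: next | apply: prev].
  by rewrite !inE => /orP [] /eqP ->; auto.
- have : z \in [set nth x s r.-1].
    by apply: full; rewrite ?cards1 //; apply/subsetP => y; rewrite !inE => /eqP ->; apply: prev.
  by rewrite inE => /eqP ->; auto.
- have : z \in [set nth x s r.+1].
    by apply: full; rewrite ?cards1 //; apply/subsetP => y; rewrite !inE => /eqP ->; apply: next.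
  by rewrite inE => /eqP ->; auto.
- have : z \in N by rewrite inE.
  by rewrite /N; move: hcard; rewrite leqn0 cards_eq0 => /eqP ->; rewrite inE.
Qed.

Lemma path_interior x p r : let s := x :: p in
  path R x p -> uniq s -> 0 < r < size p ->
  [/\ R (nth x s r) (nth x s r.+1), R (nth x s r) (nth x s r.-1)
    & nth x s r.+1 != nth x s r.-1].
Proof.
move=> s hp hu /andP [hr0 hr]; split.
- exact: (pathP x hp).
- by apply: path_prev; rewrite // hr0 ltnW.
- by rewrite nth_uniq //=; lia.
Qed.

Lemma path_component (R' : rel V) x p t : let s := x :: p in
  path R x p -> uniq s -> 0 < t <= size s ->
  (forall r, r < t -> #|[set y | R (nth x s r) y]| <= (0 < r) + (r < size p)) ->
  (forall a b, index a s < t -> R' a b -> R a b /\ (t <= size p -> b != nth x s t)) ->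
  forall y, connect R' x y -> index y s < t.
Proof.
move=> s hp hu /andP [ht0 ht] hdeg hR' y.
apply: (@connect_inv R' (fun z => index z s < t)) => [a b ha hab|]; last first.
  by rewrite /= eqxx.
have [hab' hcut] := hR' a b ha hab.
have ea : a = nth x s (index a s) by rewrite nth_index // -index_mem (leq_trans ha).
have hr : index a s <= size p by rewrite -ltnS (leq_trans ha).
have idx r : r < size s -> index (nth x s r) s = r by move=> h; apply: index_uniq.
move: hab'; rewrite ea => /(@path_nbr x p _ b hp hu hr (hdeg _ ha)) [[hr1 eb] | [hr0 ->]].
  rewrite eb idx // ltn_neqAle ha andbT; apply/eqP => ht1.
  have /hcut : t <= size p by rewrite -ht1.
  by rewrite eb ht1 eqxx.
have hpred : (index a s).-1 <= index a s := leq_pred _.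
by rewrite idx; [apply: leq_ltn_trans hpred ha | apply: leq_ltn_trans hpred _].
Qed.

End Paths.
Arguments connect_inv {V R Q x y}.
Arguments connect_upath {V R x y}.
Arguments path_prev {V R} Rsym {x p r}.
Arguments path_nbr {V R} Rsym {x p r z}.
Arguments path_interior {V R} Rsym {x p r}.
Arguments path_component {V R} Rsym R' {x p t}.

Section Brooks.
Variable V : finType.
Variable e : rel V.
Hypothesis e_sym : symmetric e.
Hypothesis e_irr : irreflexive e.
Variable k : nat.
Hypothesis hdeg : forall x, #|[set y | e x y]| <= k.
Hypothesis hk3 : 3 <= k.
Hypothesis hcliq : ~ exists T : {set V}, #|T| = k.+1 /\
  (forall x y, x \in T -> y \in T -> x != y -> e x y).

(* A minimal counterexample: U is not k-colourable, but U minus v is. *)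
Section MinimalCounterexample.
Variable U : {set V}.
Variable v : V.
Hypothesis hv : v \in U.
Hypothesis hnone : forall c : V -> 'I_k, ~ proper_colouring e U c.

Implicit Types (c : V -> 'I_k) (m : 'I_k).

Definition U' := U :\ v.

Definition Nv := [set y in U' | e v y].

Definition udeg u := #|[set z in U' | e u z]|.
Definition ncol (c : V -> 'I_k) u m := #|[set z in U' | e u z & c z == m]|.

Lemma Nv_sub {y} : y \in Nv -> y \in U'.
Proof. by rewrite inE => /andP []. Qed.

Lemma udeg_le u : udeg u <= k.
Proof.
apply: leq_trans (hdeg u); apply: subset_leq_card.
by apply/subsetP => y; rewrite !inE => /andP [].
Qed.

(* A neighbour of v has v as a further neighbour outside U'. *)
Lemma udeg_Nv {u} : u \in Nv -> udeg u < k.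
Proof.
move=> hu; apply: leq_trans (hdeg u); apply: proper_card; rewrite properE.
apply/andP; split; first by apply/subsetP => z; rewrite !inE => /andP [].
apply/subsetPn; exists v; last by rewrite !inE eqxx.
by move: hu; rewrite !inE e_sym => /andP [].
Qed.

(* Every proper colouring of U' uses all k colours on Nv: a missing colour
   could be given to v. *)
Lemma Nv_image {c} : proper_colouring e U' c -> c @: Nv = [set: 'I_k].
Proof.
move=> hc; apply/eqP; rewrite eqEsubset subsetT /=; apply/subsetP => m _.
case: (boolP [exists y in Nv, c y == m]) => [/exists_inP [y hy /eqP <-] | /exists_inPn hn].
  exact: imset_f.
exfalso; apply: (hnone (recol c v m)); apply: (proper_recol e_sym e_irr hv hc).
by move=> y hy hvy; apply: hn; rewrite inE /U' hy.
Qed.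

Lemma card_Nv {c} : proper_colouring e U' c -> #|Nv| = k.
Proof.
move=> hc; apply/eqP; rewrite eqn_leq; apply/andP; split.
  apply: leq_trans (hdeg v); apply: subset_leq_card.
  by apply/subsetP => y; rewrite !inE => /andP [].
by rewrite -[X in X <= _]card_ord -cardsT -(Nv_image hc) leq_imset_card.
Qed.

Lemma Nv_colour_inj {c} : proper_colouring e U' c -> {in Nv &, injective c}.
Proof.
by move=> hc; apply/imset_injP; rewrite (Nv_image hc) cardsT card_ord (card_Nv hc).
Qed.

Lemma sum_ncol c u : \sum_(m < k) ncol c u m = udeg u.
Proof.
rewrite /udeg -sum1_card (partition_big c xpredT) //=.
apply: eq_bigr => m _; rewrite /ncol -sum1_card; apply: eq_bigl => z.
by rewrite !inE andbA.
Qed.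

Lemma saturated_bound {c u} : (forall m, m != c u -> 0 < ncol c u m) ->
  k.-1 + \sum_(m < k | m != c u) (ncol c u m).-1 <= udeg u.
Proof.
move=> hsat; rewrite -(sum_ncol c u) [X in _ <= X](bigID (fun m => m != c u)) /=.
apply: leq_trans _ (leq_addr _ _).
have -> : k.-1 = \sum_(m < k | m != c u) 1 by rewrite sum1_card cardC1 card_ord.
rewrite -big_split /=.
by apply: leq_sum => m hm; rewrite add1n prednK // hsat.
Qed.

Lemma spare_colour c u : 1 < \sum_(m < k | m != c u) (ncol c u m).-1 ->
  exists2 m, m != c u & ncol c u m = 0.
Proof.
move=> hsum.
case: (boolP [exists m, (m != c u) && (ncol c u m == 0)]).
  by case/existsP => m /andP [hm /eqP h0]; exists m.
move/existsPn => hall; exfalso.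
have hsat m : m != c u -> 0 < ncol c u m.
  by move=> hm; have := hall m; rewrite hm lt0n.
have := leq_trans (saturated_bound hsat) (udeg_le u); lia.
Qed.

Lemma recol_spare {c u m} : u \in U' -> proper_colouring e U' c -> ncol c u m = 0 ->
  proper_colouring e U' (recol c u m).
Proof.
move=> hu hc h0; apply: (proper_recol e_sym e_irr) => //.
  by apply: proper_sub hc; apply: subD1set.
move=> y hy hyu; apply/negP => /eqP hm.
have : y \in [set z in U' | e u z & c z == m].
  by rewrite inE hyu hm eqxx !andbT; exact: (subsetP (subD1set U' u)) y hy.
by move: h0; rewrite /ncol => /eqP; rewrite cards_eq0 => /eqP ->; rewrite inE.
Qed.

Lemma Nv_one_of_each {c y m} : proper_colouring e U' c -> y \in Nv -> m != c y ->
  ncol c y m = 1.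
Proof.
move=> hc hy hm.
have hpos m' : m' != c y -> 0 < ncol c y m'.
  move=> hm'; rewrite lt0n; apply/negP => /eqP h0.
  have hc' := recol_spare (Nv_sub hy) hc h0.
  have /imsetP [z hz] : c y \in recol c y m' @: Nv by rewrite (Nv_image hc') inE.
  rewrite /recol; case: (z =P y) => [_ /eqP | /eqP nzy hzy]; first by rewrite eq_sym (negbTE hm').
  by move: nzy; rewrite (Nv_colour_inj hc _ _ hz hy (esym hzy)) eqxx.
have := saturated_bound hpos; rewrite (bigD1 m) //=.
have := udeg_Nv hy; have := hpos m hm; lia.
Qed.

Definition kempe c (i j : 'I_k) : rel V := fun x y =>
  [&& x \in U', y \in U', e x y, c x \in [set i; j] & c y \in [set i; j]].

Lemma kempe_sym c i j : symmetric (kempe c i j).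
Proof.
move=> x y; rewrite /kempe e_sym.
by do 2 case: (_ \in U'); case: (e y x); rewrite //= andbC.
Qed.

Lemma kempe_C c i j : kempe c i j =2 kempe c j i.
Proof. by move=> x y; rewrite /kempe setUC. Qed.

Lemma kempe_in {c i j x y} : kempe c i j x y -> (y \in U') && (c y \in [set i; j]).
Proof. by case/and5P => _ -> _ _ ->. Qed.

Lemma kempe_reach {c i j a x} : connect (kempe c i j) a x ->
  x = a \/ (x \in U') && (c x \in [set i; j]).
Proof.
move=> hx; have : (x == a) || (x \in U') && (c x \in [set i; j]).
  apply: (@connect_inv _ (kempe c i j) (fun z => (z == a) || (z \in U') && (c z \in [set i; j])) a x _ _ hx).
    by move=> y z _ /kempe_in ->; rewrite orbT.
  by rewrite eqxx.
by case/orP => [/eqP|]; [left | right].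
Qed.

Lemma kempe_nbr {c i j x z} : proper_colouring e U' c -> c x = i ->
  kempe c i j x z -> z \in [set y in U' | e x y & c y == j].
Proof.
move=> hc hx /and5P [hxU hzU hxz _ hz]; rewrite inE hzU hxz /=.
move: hz; rewrite !inE => /orP [/eqP hzi | //].
by have := hc x z hxU hzU hxz; rewrite hx hzi eqxx.
Qed.

Definition kdeg c i j x := #|[set z | kempe c i j x z]|.

Lemma kdeg_C c i j x : kdeg c i j x = kdeg c j i x.
Proof. by apply: eq_card => z; rewrite !inE kempe_C. Qed.

Lemma kdeg_ncol {c i j x} : proper_colouring e U' c -> c x = i ->
  kdeg c i j x <= ncol c x j.
Proof.
by move=> hc hx; apply: subset_leq_card; apply/subsetP => z; rewrite inE; apply: kempe_nbr.
Qed.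

Lemma kdeg_Nv {c i j y} : proper_colouring e U' c -> i != j -> y \in Nv -> c y = i ->
  kdeg c i j y <= 1.
Proof.
move=> hc hij hy hyi; apply: leq_trans (kdeg_ncol hc hyi) _.
by rewrite (Nv_one_of_each hc hy) // hyi eq_sym.
Qed.

Lemma other_colour {c i j u} : proper_colouring e U' c -> i != j -> c u \in [set i; j] ->
  exists o, [/\ o != c u, (forall m, m != c u -> m != o -> m \notin [set i; j])
              & kdeg c i j u <= ncol c u o].
Proof.
move=> hc hij; rewrite !inE => /orP [/eqP hci | /eqP hcj].
  exists j; split; first by rewrite hci eq_sym.
  - by move=> m; rewrite hci !inE => /negbTE -> /negbTE ->.
  - exact: kdeg_ncol.
exists i; split; first by rewrite hcj.
- by move=> m; rewrite hcj !inE => /negbTE -> /negbTE ->.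
- by rewrite kdeg_C; apply: kdeg_ncol.
Qed.

Lemma tperm_set2 (i j m : 'I_k) : (tperm i j m \in [set i; j]) = (m \in [set i; j]).
Proof. by case: tpermP => [-> | -> | //]; rewrite !inE !eqxx ?orbT. Qed.

Definition kempe_swap c i j a : V -> 'I_k :=
  fun x => if connect (kempe c i j) a x then tperm i j (c x) else c x.

Lemma kempe_swap_proper c i j a : proper_colouring e U' c ->
  proper_colouring e U' (kempe_swap c i j a).
Proof.
move=> hc.
have edge_out x y : x \in U' -> y \in U' -> e x y ->
    connect (kempe c i j) a x -> ~~ connect (kempe c i j) a y -> tperm i j (c x) != c y.
  move=> hx hy hxy cx cy; apply/eqP => hs.
  have [hin | hout] := boolP (c y \in [set i; j]).
    apply: (negP cy); apply: connect_trans cx (connect1 _).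
    by rewrite /kempe hx hy hxy hin -tperm_set2 hs hin.
  move: hout; rewrite -hs tperm_set2 !inE negb_or => /andP [hxi hxj].
  by move: (hc x y hx hy hxy); rewrite -hs tpermD 1?eq_sym // eqxx.
move=> x y hx hy hxy; rewrite /kempe_swap.
case cx: (connect _ a x); case cy: (connect _ a y).
- by rewrite (inj_eq perm_inj); apply: hc.
- by apply: edge_out => //; rewrite cy.
- by rewrite eq_sym; apply: edge_out => //; [rewrite e_sym | rewrite cx].
- exact: hc.
Qed.

(* In a proper colouring of U', the neighbours of v coloured i and j lie in a
   common (i,j)-Kempe component; otherwise a swap would free the colour i. *)
Lemma kempe_connected {c i j y1 y2} : proper_colouring e U' c -> i != j ->
  y1 \in Nv -> y2 \in Nv -> c y1 = i -> c y2 = j -> connect (kempe c i j) y1 y2.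
Proof.
move=> hc hij h1 h2 c1 c2; apply/negPn/negP => hn.
have hc' := kempe_swap_proper c i j y1 hc.
have /imsetP [z hz] : i \in kempe_swap c i j y1 @: Nv by rewrite (Nv_image hc') inE.
rewrite /kempe_swap; case: ifP => cz hzi.
  have ez : z = y2.
    apply: (Nv_colour_inj hc) => //; rewrite c2; apply: (@perm_inj _ (tperm i j)).
    by rewrite -hzi tpermR.
  by rewrite -ez cz in hn.
have ez : z = y1 by apply: (Nv_colour_inj hc) => //; rewrite c1.
by rewrite ez connect0 in cz.
Qed.

Section KempeChain.
Variables (c : V -> 'I_k) (i j : 'I_k) (y1 y2 : V) (p : seq V).
Hypotheses (hc : proper_colouring e U' c) (hij : i != j).
Hypotheses (hy1 : y1 \in Nv) (hy2 : y2 \in Nv) (c1 : c y1 = i) (c2 : c y2 = j).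
Hypotheses (hp : path (kempe c i j) y1 p) (hu : uniq (y1 :: p)) (hl : last y1 p = y2).

Lemma chain_last : nth y1 (y1 :: p) (size p) = y2.
Proof. by rewrite -hl (last_nth y1). Qed.

Lemma chain_size : 0 < size p.
Proof.
rewrite lt0n size_eq0; apply: contraNneq hij => p0.
by rewrite -c1 -c2 -hl p0.
Qed.

Lemma chain_in r : 0 < r <= size p ->
  (nth y1 (y1 :: p) r \in U') && (c (nth y1 (y1 :: p) r) \in [set i; j]).
Proof.
move=> hr; apply: (@kempe_in c i j (nth y1 (y1 :: p) r.-1)).
by rewrite kempe_sym; apply: (path_prev (kempe_sym c i j)).
Qed.

(* Giving the chain vertex s_t a colour m outside {i,j} would separate y1
   from y2, provided the chain does not branch before s_t. *)
Lemma chain_cut t m : 0 < t < size p ->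
  (forall r, 0 < r < t -> kdeg c i j (nth y1 (y1 :: p) r) <= 2) ->
  m \notin [set i; j] -> ncol c (nth y1 (y1 :: p) t) m = 0 -> False.
Proof.
move=> /andP [ht0 htp] hdeg2 hm h0.
set s := y1 :: p; set u := nth y1 s t.
have idx r : r < size s -> index (nth y1 s r) s = r by move=> hr; apply: index_uniq.
have /andP [huU _] : (u \in U') && (c u \in [set i; j]) by apply: chain_in; rewrite ht0 ltnW.
have hc' := recol_spare huU hc h0.
have y1u : y1 != u by rewrite [y1](_ : _ = nth y1 s 0) // nth_uniq //= ?ltnS ?(ltnW htp) // eq_sym -lt0n.
have y2u : y2 != u by rewrite -chain_last nth_uniq //= ?ltnS ?(ltnW htp) // neq_ltn htp orbT.
have c1' : recol c u m y1 = i by rewrite /recol (negbTE y1u).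
have c2' : recol c u m y2 = j by rewrite /recol (negbTE y2u).
have hconn := kempe_connected hc' hij hy1 hy2 c1' c2'.
suff : index y2 s < t by rewrite -chain_last idx // ltnNge ltnW.
apply: (path_component (kempe_sym c i j) (kempe (recol c u m) i j) hp hu) hconn.
- by rewrite ht0 /=; apply/leqW/ltnW.
- case=> [_ | r hr] /=; first by rewrite chain_size; apply: kdeg_Nv.
  by rewrite (ltn_trans hr htp); exact: (hdeg2 r.+1 hr).
- move=> a b ha hab.
  have au : a != u by apply: contraTneq ha => ->; rewrite idx ?ltnn // ltnS ltnW.
  have bu : b != u.
    apply: contraNneq hm => ebu; move/kempe_in: hab => /andP [_].
    by rewrite ebu /recol eqxx.
  by move: hab; rewrite /kempe /recol (negbTE au) (negbTE bu).
Qed.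

(* Hence interior chain vertices have exactly their two path neighbours
   as Kempe neighbours: a third would force a spare colour at them. *)
Lemma chain_interior r : 0 < r < size p -> kdeg c i j (nth y1 (y1 :: p) r) <= 2.
Proof.
elim/ltn_ind: r => r IH /andP [hr0 hrp]; rewrite leqNgt; apply/negP => h3.
set u := nth y1 (y1 :: p) r.
have /andP [_ hui] : (u \in U') && (c u \in [set i; j]) by apply: chain_in; rewrite hr0 ltnW.
have [o [hou hoij hko]] := other_colour hc hij hui.
have [m hm h0] : exists2 m, m != c u & ncol c u m = 0.
  apply: spare_colour; rewrite (bigD1 o hou) /=; have := leq_trans h3 hko; lia.
have hmo : m != o.
  by apply: contraTneq h3 => emo; have := hko; rewrite -emo h0 leqn0 => /eqP ->.
apply: (chain_cut r m) (hoij m hm hmo) h0; first by rewrite hr0.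
by move=> r' /andP [h1 h2]; apply: IH => //; rewrite h1 (ltn_trans h2 hrp).
Qed.

Lemma chain_component x : connect (kempe c i j) y1 x -> x \in y1 :: p.
Proof.
move=> hx; rewrite -index_mem.
apply: (path_component (kempe_sym c i j) (kempe c i j) hp hu) hx.
- by rewrite /= leqnn.
- move=> [_ | r hr]; first by rewrite /= chain_size; apply: kdeg_Nv.
  have /orP [/eqP hr' | hr'] : (r.+1 == size p) || (r.+1 < size p).
    by rewrite -leq_eqVlt; exact: hr.
  + rewrite hr' ltnn addn0 chain_last -/(kdeg c i j y2) kdeg_C chain_size.
    have hji : j != i by rewrite eq_sym.
    exact: (kdeg_Nv hc hji hy2 c2).
  + by rewrite hr'; apply: chain_interior.
- by move=> a b _ hab; split => //; rewrite ltnn.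
Qed.

Lemma chain_branch u : connect (kempe c i j) y1 u -> u != y1 -> c u = i ->
  1 < ncol c u j /\ (forall m, m \notin [set i; j] -> ncol c u m = 0 -> False).
Proof.
move=> hx hne hcu; set s := y1 :: p.
have hidx : index u s < size s by rewrite index_mem; apply: chain_component.
set r := index u s in hidx; have eu : u = nth y1 s r by rewrite nth_index // -index_mem.
have hr0 : 0 < r by rewrite lt0n; apply: contra hne => /eqP hr; rewrite eu hr.
have hrp : r < size p.
  rewrite ltn_neqAle -ltnS hidx andbT; apply: contraNneq hij => hr.
  by rewrite -c2 -chain_last -hr -eu hcu.
have [e_next e_prev hne2] := path_interior (kempe_sym c i j) hp hu (introT andP (conj hr0 hrp)).
rewrite -eu in e_next e_prev; split.
  apply/card_gt1P; exists (nth y1 s r.+1), (nth y1 s r.-1).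
  by split => //; apply: (kempe_nbr hc hcu).
move=> m hm h0; apply: (chain_cut r m) hm _; first by rewrite hr0.
  by move=> r' /andP [h1 h2]; apply: chain_interior; rewrite h1 (ltn_trans h2 hrp).
by rewrite -eu.
Qed.

End KempeChain.
Arguments chain_branch {c i j y1 y2 p}.

(* The (i,j)- and (i,l)-Kempe components of a neighbour y of v coloured i
   meet only at y: a common vertex u would have two neighbours of colour j
   and two of colour l, hence a spare colour, which chain_branch excludes. *)
Lemma kempe_chains_meet {c i j l yi yj yl u} : proper_colouring e U' c ->
  i != j -> i != l -> j != l -> yi \in Nv -> yj \in Nv -> yl \in Nv ->
  c yi = i -> c yj = j -> c yl = l ->
  connect (kempe c i j) yi u -> connect (kempe c i l) yi u -> u = yi.
Proof.
move=> hc hij hil hjl hi hj hl ci cj cl cu1 cu2; apply/eqP/negPn/negP => hne.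
have hcu : c u = i.
  case: (kempe_reach cu1) => [eu | /andP [_]]; first by rewrite eu eqxx in hne.
  case: (kempe_reach cu2) => [eu | /andP [_]]; first by rewrite eu eqxx in hne.
  rewrite !inE => /orP [/eqP // | /eqP hcl] /orP [/eqP // | /eqP hcj].
  by move: hjl; rewrite -hcj hcl eqxx.
have [p [hp hlast hu]] := connect_upath (kempe_connected hc hij hi hj ci cj).
have [p' [hp' hlast' hu']] := connect_upath (kempe_connected hc hil hi hl ci cl).
have [hj2 no_spare] := chain_branch hc hij hi hj ci cj hp hu hlast u cu1 hne hcu.
have [hl2 _] := chain_branch hc hil hi hl ci cl hp' hu' hlast' u cu2 hne hcu.
have [m hm h0] : exists2 m, m != c u & ncol c u m = 0.
  have hjP : j != c u by rewrite hcu eq_sym.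
  have hlP : (l != c u) && (l != j) by rewrite hcu eq_sym hil eq_sym hjl.
  have two_surplus a b r : 1 < a -> 1 < b -> 1 < a.-1 + (b.-1 + r).
    by case: a b => [|[|a]] [|[|b]] //= _ _; rewrite !addSn addnS.
  by apply: spare_colour; rewrite (bigD1 j hjP) (bigD1 l hlP) /=; apply: two_surplus.
apply: (no_spare m _ h0); rewrite !inE negb_or -hcu hm /=.
by apply: contraTneq hj2 => <-; rewrite h0.
Qed.

(* Let w be the unique neighbour of a coloured j.  Any recolouring c' that
   fixes the (i,j)-component of a outside a keeps w and b in one
   (i,j)-Kempe component: the Kempe path from a to b runs through w. *)
Lemma chain_after_recolour {c c' i j a b w} : proper_colouring e U' c -> i != j ->
  a \in Nv -> b \in Nv -> c a = i -> c b = j ->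
  [set z in U' | e a z & c z == j] = [set w] ->
  (forall x, connect (kempe c i j) a x -> x != a -> c' x = c x) ->
  connect (kempe c' i j) w b.
Proof.
move=> hc hij ha hb ca cb hw hfix.
have [p [hp hlast hu]] := connect_upath (kempe_connected hc hij ha hb ca cb).
case: p hp hlast hu => [/= _ eab | h p]; first by move: hij; rewrite -ca -cb eab eqxx.
rewrite /= => /andP [hah hp] hlast hu.
have ehw : h = w by apply/set1P; rewrite -hw; apply: kempe_nbr hc ca hah.
subst h; apply/connectP; exists p => //.
have hall : all (fun x => c' x == c x) (w :: p).
  apply/allP => x hx; apply/eqP; apply: hfix.
    by apply: (path_connect (p := w :: p)); rewrite /= ?hah ?hp // inE hx orbT.
  by apply: contraTneq hx => ->; move: hu => /andP [].
apply: (sub_in_path _ hall hp) => x y /eqP hx /eqP hy.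
by rewrite /kempe hx hy.
Qed.

(* Since there is no (k+1)-clique, two neighbours of v are non-adjacent. *)
Lemma Nv_nonadjacent {c} : proper_colouring e U' c ->
  exists a b, [/\ a \in Nv, b \in Nv, a != b & ~~ e a b].
Proof.
move=> hc; case: (boolP [exists a in Nv, exists b in Nv, (a != b) && ~~ e a b]).
  by case/exists_inP => a ha /exists_inP [b hb /andP [h1 h2]]; exists a, b.
move/exists_inPn => hall; exfalso; apply: hcliq; exists (v |: Nv); split.
  have hvN : v \notin Nv by rewrite /Nv /U' !inE eqxx.
  by rewrite cardsU1 hvN (card_Nv hc).
have hvx x : x \in Nv -> e v x by rewrite inE => /andP [].
move=> x y; rewrite !in_setU1 => /orP [/eqP -> | hx] /orP [/eqP -> | hy]; rewrite ?eqxx // => hxy.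
- exact: hvx.
- by rewrite e_sym; apply: hvx.
- have := hall x hx; rewrite negb_exists_in => /forall_inP /(_ y hy).
  by rewrite hxy negbK.
Qed.

(* The minimal counterexample is contradictory: pick non-adjacent neighbours
   a, b of v (colours i, j), the neighbour w of a coloured j, a third colour l
   on yl.  After swapping (i,l) on the component of a, the vertex w lies on
   both the (j,l)- and the (j,i)-chain from b, so w = b by kempe_chains_meet,
   contradicting the non-adjacency of a and b. *)
Lemma no_colouring_of_U' c : proper_colouring e U' c -> False.
Proof.
move=> hc; have [a [b [ha hb hab nab]]] := Nv_nonadjacent hc.
set i := c a; set j := c b.
have hij : i != j by apply: contra hab => /eqP /(Nv_colour_inj hc _ _ ha hb) ->.
have [w hw] : exists w, [set z in U' | e a z & c z == j] = [set w].
  by apply/cards1P; rewrite -/(ncol c a j) (Nv_one_of_each hc ha) // eq_sym.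
have : w \in [set z in U' | e a z & c z == j] by rewrite hw set11.
rewrite inE => /and3P [hwU haw /eqP hcw].
have hwb : w != b by apply: contraNneq nab => <-.
have hwa : w != a by apply: contraTneq haw => ->; rewrite e_irr.
have /subsetPn [l _] : ~~ ([set: 'I_k] \subset [set i; j]).
  by apply/negP => /subset_leq_card; rewrite cardsT card_ord cards2 hij => /(leq_trans hk3).
rewrite !inE negb_or => /andP [hli hlj].
have /imsetP [yl hyl eyl] : l \in c @: Nv by rewrite (Nv_image hc) inE.
have hil : i != l by rewrite eq_sym.
have hjl : j != l by rewrite eq_sym.
pose c' := kempe_swap c i l a.
have hc' : proper_colouring e U' c' := kempe_swap_proper c i l a hc.
have c'a : c' a = l by rewrite /c' /kempe_swap connect0 tpermL.
have c'yl : c' yl = i.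
  by rewrite /c' /kempe_swap (kempe_connected hc hil ha hyl erefl (esym eyl)) -eyl tpermR.
have hfix x : connect (kempe c i j) a x -> x != a -> c' x = c x.
  move=> hx hxa; rewrite /c' /kempe_swap; case: ifP => // hK.
  by move: hxa; rewrite (kempe_chains_meet hc hij hil hjl ha hb hyl erefl erefl (esym eyl) hx hK) eqxx.
have c'b : c' b = j by apply: hfix; [apply: kempe_connected | rewrite eq_sym].
have c'w : c' w = j.
  by rewrite hfix // ?hcw //; apply: connect1; rewrite /kempe (Nv_sub ha) hwU haw hcw !inE !eqxx orbT.
have conn_jl : connect (kempe c' j l) b w.
  apply: connect_trans (kempe_connected hc' hjl hb ha c'b c'a) (connect1 _).
  by rewrite /kempe (Nv_sub ha) hwU haw c'a c'w !inE !eqxx !orbT.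
have conn_ji : connect (kempe c' j i) b w.
  rewrite (eq_connect (kempe_C c' j i)) (sym_connect_sym (kempe_sym c' i j)).
  exact: chain_after_recolour hc hij ha hb erefl erefl hw hfix.
have hji : j != i by rewrite eq_sym.
move/eqP: (kempe_chains_meet hc' hjl hji hli hb ha hyl c'b c'a c'yl conn_jl conn_ji).
by rewrite (negbTE hwb).
Qed.

End MinimalCounterexample.

(* Brooks' theorem for k >= 3: a graph of maximum degree at most k without a
   (k+1)-clique is k-colourable.  Induction on the vertex set; a failing
   extension would be a minimal counterexample. *)
Theorem brooks_colouring (U : {set V}) : exists c : V -> 'I_k, proper_colouring e U c.
Proof.
have hk0 : 0 < k by apply: leq_trans hk3.
have [N] := ubnP #|U|; elim: N U => [|N IH] U //.
have [-> _ | [v hv] hU] := set_0Vmem U.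
  by exists (fun _ => Ordinal hk0) => x y; rewrite inE.
have [c0 hc0] : exists c : V -> 'I_k, proper_colouring e (U :\ v) c.
  by apply: IH; move: hU; rewrite (cardsD1 v U) hv.
apply: Classical_Prop.NNPP => hn.
exact: (@no_colouring_of_U' U v hv (fun c hc => hn (ex_intro _ c hc)) c0 hc0).
Qed.

End Brooks.

Definition interaction_graph n (S : {set {set 'I_n}}) : rel 'I_n :=
  fun i j => (i != j) && ([set i; j] \in S).
Arguments interaction_graph {n} S.

Lemma interaction_graph_sym {n} (S : {set {set 'I_n}}) : symmetric (interaction_graph S).
Proof. by move=> i j; rewrite /interaction_graph eq_sym setUC. Qed.

Lemma interaction_graph_irr {n} (S : {set {set 'I_n}}) : irreflexive (interaction_graph S).
Proof. by move=> i; rewrite /interaction_graph eqxx. Qed.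

Lemma fdeg_nbrs {n} (S : {set {set 'I_n}}) (hS : two_factor_interactions S) i :
  fdeg S i = #|[set j | interaction_graph S i j]|.
Proof.
rewrite /fdeg; set A := [set j | interaction_graph S i j].
have -> : [set s in S | i \in s] = [set [set i; j] | j in A].
  apply/setP => s; rewrite inE; apply/andP/imsetP => [[hs his] | [j]].
    have /cards2P [x [y [hxy es]]] : #|s| == 2 by rewrite (hS s hs).
    subst s; move: his; rewrite !inE => /orP [/eqP ex | /eqP ey]; subst i.
      by exists y; rewrite // inE /interaction_graph hxy.
    exists x; last by rewrite setUC.
    by rewrite inE /interaction_graph eq_sym hxy setUC.
  by rewrite inE => /andP [_ hj] ->; rewrite hj !inE eqxx.
rewrite card_in_imset // => j j' hj hj' ej.
have : j \in [set i; j'] by rewrite -ej !inE eqxx orbT.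
rewrite !inE => /orP [/eqP eji | /eqP //].
by move: hj; rewrite inE eji /interaction_graph eqxx.
Qed.

(* Under either hypothesis of Theorem 3 the interaction graph has a proper
   colouring with 2^q - 1 colours: (i) by Brooks' theorem when 2^q - 1 >= 3,
   and for q = 1 because then the graph has no edge (an edge would be a
   2-clique); (ii) by the degeneracy argument. *)
Lemma interaction_colouring {n q} {S : {set {set 'I_n}}} :
  two_factor_interactions S -> 1 <= q ->
  ( ((forall i : 'I_n, fdeg S i <= 2 ^ q - 1) /\
     ~ (exists T : {set 'I_n}, #|T| = 2 ^ q /\
          (forall i j : 'I_n, i \in T -> j \in T -> i != j -> [set i; j] \in S)))
    \/ #|[set i : 'I_n | 2 ^ q - 1 <= fdeg S i]| <= 2 ^ q - 1 ) ->
  exists c : 'I_n -> 'I_(2 ^ q - 1), proper_colouring (interaction_graph S) [set: 'I_n] c.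
Proof.
move=> hS hq hyp.
have e_sym := interaction_graph_sym S; have e_irr := interaction_graph_irr S.
have hk0 : 0 < 2 ^ q - 1 by rewrite subn_gt0 -{1}(expn0 2) ltn_exp2l.
case: hyp => [[hdeg hcl] | hfew]; last first.
  apply: few_high_degree_colouring => //.
  apply: leq_trans hfew; apply: subset_leq_card; apply/subsetP => x.
  by rewrite !inE fdeg_nbrs.
have no_clique (T : {set 'I_n}) : #|T| = 2 ^ q ->
    ~ (forall x y, x \in T -> y \in T -> x != y -> interaction_graph S x y).
  move=> hT hTe; apply: hcl; exists T; split => // x y hx hy hxy.
  by have /andP [] := hTe x y hx hy hxy.
have [hq2 | hq1] := ltnP 1 q.
  apply: brooks_colouring => //.
  - by move=> x; rewrite -fdeg_nbrs.
  - have : 2 ^ 2 <= 2 ^ q by rewrite leq_exp2l.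
    by rewrite expnS expn1; lia.
  - by move=> [T [hT]]; apply: (no_clique T); rewrite hT subn1 prednK // expn_gt0.
apply: edgeless_colouring => // x y; apply/negP => hxy.
apply: (no_clique [set x; y]).
  have -> : q = 1 by apply/eqP; rewrite eqn_leq hq1.
  by move: hxy => /andP [hxy _]; rewrite cards2 hxy.
move=> i j; rewrite !inE => /orP [] /eqP -> /orP [] /eqP ->; rewrite ?eqxx //.
by rewrite interaction_graph_sym.
Qed.

Import GRing.Theory.
Local Open Scope ring_scope.

Lemma F2_cases (a : 'F_2) : a = 0 \/ a = 1.
Proof. by case: a => [[|[|m]] hm] //=; [left | right]; apply/val_inj. Qed.

Lemma F2_nz1 (a : 'F_2) : a != 0 -> a = 1.
Proof. by case: (F2_cases a) => ->; rewrite ?eqxx. Qed.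

Lemma F2_neq1 (a b : 'F_2) : a != b -> a + b = 1.
Proof.
by case: (F2_cases a) => ->; case: (F2_cases b) => ->; rewrite ?eqxx // => _; apply/val_inj.
Qed.

Lemma contrast_shift n (T : {set 'I_n}) (x r : 'rV['F_2]_n) :
  \sum_(j in T) r 0 j = 1 -> contrast T (x + r) = - contrast T x.
Proof.
move=> hr; rewrite /contrast.
have -> : \sum_(j in T) (x + r) 0 j = \sum_(j in T) x 0 j + 1.
  by rewrite -hr -big_split /=; apply: eq_bigr => j _; rewrite mxE.
by case: (F2_cases (\sum_(j in T) x 0 j)) => ->.
Qed.

(* If the row space of X contains a vector r of odd weight on T, the effect
   of T is estimable: x |-> x + r permutes every block and negates the
   contrast, so each block sum equals its own opposite. *)
Lemma estimable_of q n (X : 'M['F_2]_(q, n)) (T : {set 'I_n}) (r : 'rV['F_2]_n) :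
  (r <= X)%MS -> \sum_(j in T) r 0 j = 1 -> estimable X T.
Proof.
move=> rX hr a; set S := \sum_(x | _) _.
suff : S = - S by lia.
rewrite {1}/S (reindex_inj (addIr r)) /= /S -sumrN; apply: eq_big => x; last first.
  by move=> _; rewrite contrast_shift.
rewrite /in_block -addrA [r - a]addrC addrA.
apply/idP/idP => h; last exact: addmx_sub h rX.
have -> : x - a = (x - a + r) + (-1) *: r by rewrite scaleN1r addrK.
exact: addmx_sub h (scalemx_sub _ rX).
Qed.

Definition separating n q (E : rel 'I_n) (col : 'I_n -> 'rV['F_2]_q) :=
  (forall i, col i != 0) /\ (forall i j, E i j -> col i != col j).
Arguments separating {n q} E col.

Definition factor_matrix n q (col : 'I_n -> 'rV['F_2]_q) : 'M['F_2]_(n, q) :=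
  \matrix_i col i.
Arguments factor_matrix {n q} col.

Lemma rank_replace_row (F : fieldType) m q (col : 'I_m -> 'rV[F]_q)
    (u : 'rV[F]_m) i0 (v : 'rV[F]_q) :
  u *m (\matrix_i col i) = 0 -> u 0 i0 = 1 -> ~~ (v <= \matrix_i col i)%MS ->
  (\rank (\matrix_i col i) < \rank (\matrix_i (if i == i0 then v else col i)))%N.
Proof.
move=> uY ui0 hv; set Y := \matrix_i col i; set Y' := \matrix_(i < m) _.
have vY' : (v <= Y')%MS by rewrite -(_ : row i0 Y' = v) ?row_sub // rowK eqxx.
apply: rank_ltmx; rewrite ltmxE; apply/andP; split; last first.
  by apply: contra hv => h; apply: submx_trans vY' h.
apply/row_subP => i; rewrite rowK.
have [-> | ne] := eqVneq i i0; last first.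
  by rewrite -(_ : row i Y' = col i) ?row_sub // rowK (negbTE ne).
(* col i0 = w *m Y for w = delta_i0 - u, and w vanishes at i0 *)
pose w := delta_mx 0 i0 - u.
have -> : col i0 = w *m Y'.
  have -> : col i0 = w *m Y by rewrite mulmxBl uY subr0 -rowE rowK.
  apply/rowP => c; rewrite !mxE; apply: eq_bigr => j _; rewrite !mxE.
  by case: (j =P i0) => [-> | //]; rewrite ui0 eqxx subrr !mul0r.
exact: submxMl.
Qed.

Section FullRank.
Variables (n q : nat) (E : rel 'I_n).
Hypothesis hqn : (q <= n)%N.

(* As long as the rank is below q <= n, some row lies in a dependency and
   can be replaced by a unit vector outside the row space; separation is
   preserved since the new vector differs from all other rows. *)
Lemma rank_step (col : 'I_n -> 'rV['F_2]_q) :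
  separating E col -> (\rank (factor_matrix col) < q)%N ->
  exists col' : 'I_n -> 'rV['F_2]_q, separating E col' /\
    (\rank (factor_matrix col) < \rank (factor_matrix col'))%N.
Proof.
move=> [hnz hsep] hr; set Y := factor_matrix col.
have : kermx Y != 0 by rewrite -mxrank_eq0 mxrank_ker -lt0n subn_gt0 (leq_trans hr).
case/matrix0Pn => r0 [i0 hu].
have uY : row r0 (kermx Y) *m Y = 0 by rewrite -row_mul mulmx_ker row0.
have : ~~ (1%:M <= Y)%MS by rewrite sub1mx /row_full neq_ltn hr.
case/row_subPn => c0 hv.
have colY i : (col i <= Y)%MS by rewrite -[col i](rowK col i) row_sub.
exists (fun i => if i == i0 then row c0 1%:M else col i); split.
  split=> [i | i j hij]; first by case: (i == i0) => //; apply: contra hv => /eqP ->; apply: sub0mx.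
  case: (i =P i0) => [ei | _]; case: (j =P i0) => [ej | _].
  - by move: (hsep i j hij); rewrite ei ej eqxx.
  - by apply: contra hv => /eqP ->; apply: colY.
  - by apply: contra hv => /eqP <-; apply: colY.
  - exact: hsep.
have ui0 : row r0 (kermx Y) 0 i0 = 1 by apply: F2_nz1; rewrite mxE.
rewrite /Y /factor_matrix in uY ui0 hv *.
exact: rank_replace_row uY ui0 hv.
Qed.

Lemma full_rank_separating (col : 'I_n -> 'rV['F_2]_q) : separating E col ->
  exists col' : 'I_n -> 'rV['F_2]_q, separating E col' /\ \rank (factor_matrix col') = q.
Proof.
have [d] := ubnP (q - \rank (factor_matrix col)); elim: d col => [|d IH] col // hd hsep.
have [hr | hr] := ltnP (\rank (factor_matrix col)) q; last first.
  by exists col; split => //; apply/eqP; rewrite eqn_leq rank_leq_col.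
have [col' [hsep' hlt]] := rank_step col hsep hr.
by apply: (IH col') => //; move: hd hlt; lia.
Qed.

End FullRank.
Arguments full_rank_separating {n q E} hqn {col}.

Lemma colouring_columns {n} q {E : rel 'I_n} {c : 'I_n -> 'I_(2 ^ q - 1)} :
  proper_colouring E [set: 'I_n] c -> exists col : 'I_n -> 'rV['F_2]_q, separating E col.
Proof.
move=> hc; pose A := [set~ (0 : 'rV['F_2]_q)].
have cA : (2 ^ q - 1)%N = #|A| by rewrite cardsC1 card_mx card_ord mul1n subn1.
pose g := fun x : 'I_(2 ^ q - 1) => enum_val (cast_ord cA x).
exists (fun i => g (c i)); split.
  by move=> i; have := enum_valP (cast_ord cA (c i)); rewrite !inE.
move=> i j hij; apply: contra (hc i j (in_setT i) (in_setT j) hij) => /eqP h.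
by apply/eqP; apply: (cast_ord_inj (eq_n := cA)); apply: enum_val_inj.
Qed.

(* Separating columns of full rank q form the columns of the required design:
   for a main effect use a row of X nonzero at i, for an interaction {i,j}
   a row of X where columns i and j differ. *)
Lemma separating_design {n q} {S : {set {set 'I_n}}} (hS : two_factor_interactions S)
    {col : 'I_n -> 'rV['F_2]_q} :
  separating (interaction_graph S) col ->
  \rank (factor_matrix col) = q ->
  exists X : 'M['F_2]_(q, n),
    \rank X = q /\ (forall i, estimable X [set i]) /\ (forall s, s \in S -> estimable X s).
Proof.
move=> [hnz hsep] hr; exists (factor_matrix col)^T; split; first by rewrite mxrank_tr.
have entry c i : (row c (factor_matrix col)^T) 0 i = col i 0 c by rewrite !mxE.
split.
  move=> i; have /matrix0Pn [i' [c hc]] := hnz i.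
  apply: (@estimable_of _ _ _ _ (row c _)); first exact: row_sub.
  by rewrite big_set1 entry; rewrite (ord1 i') in hc; apply: F2_nz1.
move=> s hs; have /cards2P [i [j [hij es]]] : #|s| == 2%N by rewrite (hS s hs).
subst s; have hcol : col i != col j by apply: hsep; rewrite /interaction_graph hij hs.
have [c hc] : exists c, col i 0 c != col j 0 c.
  apply/existsP; apply: contraR hcol => /existsPn h.
  by apply/eqP/rowP => c; apply/eqP; have := h c; rewrite negbK.
apply: (@estimable_of _ _ _ _ (row c _)); first exact: row_sub.
by rewrite big_setU1 ?inE //= big_set1 !entry; apply: F2_neq1.
Qed.

Theorem theorem3 (n q : nat) (hq : (1 <= q)%N) (hqn : (q <= n)%N)
  (S : {set {set 'I_n}}) (hS : two_factor_interactions S) :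
  ( ((forall i : 'I_n, (fdeg S i <= 2 ^ q - 1)%N) /\
     ~ (exists T : {set 'I_n}, #|T| = (2 ^ q)%N /\
          (forall i j : 'I_n, i \in T -> j \in T -> i != j -> [set i; j] \in S)))
    \/ (#|[set i : 'I_n | (2 ^ q - 1 <= fdeg S i)%N]| <= 2 ^ q - 1)%N ) ->
  exists X : 'M['F_2]_(q, n),
    \rank X = q /\
    (forall i : 'I_n, estimable X [set i]) /\
    (forall s, s \in S -> estimable X s).
Proof.
move=> hyp.
have [c hc] := interaction_colouring hS hq hyp.
have [col hcol] := colouring_columns q hc.
have [col' [hsep hrank]] := full_rank_separating hqn hcol.
have [X hX] := separating_design hS hsep hrank.
by exists X.
Qed.
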